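(* Consider the spot market described in the context, with fixed leader productions $\mathbf x\in\mathbb{R}_+^M$. Fix a follower $l$ and suppose $f_j=f$ for every follower $j\ne l$ (with $f_l$ arbitrary). Then the spot market has a unique Nash equilibrium $\mathbf y$, and it satisfies, for each $j\ne l$, \[y_j=\Big[\frac1N\Big(\alpha_y+f-\sum_{i=1}^Mx_i-y_l\Big)\Big]_0^k.\]
   Context: Model: $M\ge1$ leaders, $N\ge2$ followers; inverse demand $P(q)=\alpha-\beta q$, $\alpha,\beta>0$; follower marginal cost $c>0$; each follower has capacity $k>0$. Given leader productions $x_1,\dots,x_M\ge0$ and follower forward positions $f_1,\dots,f_N\in\mathbb{R}$, the spot market is the game among the $N$ followers in which follower $j$ chooses $y_j\in[0,k]$ to maximize $P(\sum_i x_i+\sum_{j'}y_{j'})(y_j-f_j)-cy_j$. Normalized follower demand: $\alpha_y=(\alpha-c)/\beta$. For $a\le b$, $[z]_a^b=\min(\max(z,a),b)$. *)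

From HB Require Import structures.
From mathcomp Require Import all_boot all_order all_algebra.
From mathcomp Require Import reals.
Set Implicit Arguments. Unset Strict Implicit. Unset Printing Implicit Defensive.
Import Order.TTheory GRing.Theory Num.Theory.
Local Open Scope ring_scope.

Definition clamp {R : realType} (a b z : R) : R := Num.min (Num.max z a) b.

Definition price {R : realType} (alpha beta q : R) : R := alpha - beta * q.

Definition alpha_y {R : realType} (alpha beta c : R) : R := (alpha - c) / beta.

Definition upd {R : realType} {N : nat} (y : 'I_N -> R) (j : 'I_N) (z : R) : 'I_N -> R :=
  fun j' => if j' == j then z else y j'.

Definition spot_payoff {R : realType} {M N : nat} (alpha beta c : R)
    (x : 'I_M -> R) (f : 'I_N -> R) (y : 'I_N -> R) (j : 'I_N) : R :=
  price alpha beta (\sum_(i < M) x i + \sum_(j' < N) y j') * (y j - f j) - c * y j.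

Definition spot_NE {R : realType} {M N : nat} (alpha beta c k : R)
    (x : 'I_M -> R) (f : 'I_N -> R) (y : 'I_N -> R) : Prop :=
  (forall j, 0 <= y j <= k) /\
  (forall j (z : R), 0 <= z <= k ->
     spot_payoff alpha beta c x f (upd y j z) j <= spot_payoff alpha beta c x f y j).

(* Against a total follower output S, follower j's payoff is a concave quadratic
   in its own output, so its best response is the clamped value
   [alpha_y + f_j - sum_i x_i - S]_0^k (with S including y_j itself).  An
   equilibrium is therefore determined by S, which must be a fixed point of
   S |-> sum_j [b_j - S]_0^k.  This map is continuous and nonincreasing, so a fixed
   point exists by the intermediate value theorem and is unique by monotonicity.
   When f_j = f for j <> l, the common output y_j satisfies
   y_j = [alpha_y + f - sum_i x_i - y_l - (N-1) y_j]_0^k, which solves to the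
   stated formula. *)

From HB Require Import structures.
From mathcomp Require Import all_boot all_order all_algebra.
From mathcomp Require Import reals ring lra.
From mathcomp Require Import topology normedtype.
Import numFieldNormedType.Exports.
Import Order.TTheory GRing.Theory Num.Theory.
Set Implicit Arguments.
Unset Strict Implicit.
Unset Printing Implicit Defensive.
Local Open Scope ring_scope.

Section Clamp.
Variables (R : realType) (k : R).

Lemma clampP (z w : R) : 0 <= k ->
  w = clamp 0 k z <-> [/\ 0 <= w <= k, 0 < w -> w <= z & w < k -> z <= w].
Proof.
move=> k0; rewrite /clamp.
split=> [->|[/andP[w0 wk] wz zw]].
  by case: (leP z 0) => z0; case: (leP k z) => kz;
    rewrite /Order.max /Order.min; repeat case: ifP => ?; split; try apply/andP; lra.
by case: (leP z 0) => z0; case: (leP k z) => kz;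
  rewrite /Order.max /Order.min; repeat case: ifP => ?;
  (have [w_gt0|] := ltP 0 w; have [w_ltk|] := ltP w k); lra.
Qed.

Lemma clamp_bounds (z : R) : 0 <= k -> 0 <= clamp 0 k z <= k.
Proof. by move=> k0; have [] := (clampP z (clamp 0 k z) k0).1 erefl. Qed.

Lemma clamp_le (z1 z2 : R) : z1 <= z2 -> clamp 0 k z1 <= clamp 0 k z2.
Proof. by move=> z12; apply: le_min2 => //; exact: le_max2. Qed.

Lemma continuous_clamp : continuous (clamp 0 k : R -> R).
Proof.
move=> z; apply: (@continuous_min R R (fun z => Num.max z 0) (fun _ => k)).
  by apply: (@continuous_max R R id (fun _ => 0)); [exact: cvg_id|exact: cvg_cst].
exact: cvg_cst.
Qed.

End Clamp.

Lemma clamp_argmax (R : realType) (k D w : R) : 0 <= w <= k ->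
  (forall z, 0 <= z <= k -> (z - w) * (D - z) <= 0) <-> w = clamp 0 k D.
Proof.
move=> /andP[w0 wk]; have k0 : 0 <= k by lra.
split=> [w_best|/clampP-/(_ k0)[_ wD Dw] z /andP[z0 zk]]; last first.
  have [zw|wz] := ltP z w.
    by apply: mulr_le0_ge0; have := wD (le_lt_trans z0 zw); lra.
  case: (eqVneq z w) => [->|zw]; first by rewrite subrr mul0r.
  have {wz zw}wz : w < z by rewrite lt_neqAle eq_sym zw.
  by apply: mulr_ge0_le0; have := Dw (lt_le_trans wz zk); lra.
set v := clamp 0 k D; have [/andP[v0 vk] vD Dv] := (clampP D v k0).1 erefl.
(* The midpoint of [w] and [v] would be a strictly better response. *)
have := w_best ((w + v) / 2); case: (ltgtP w v) => // [wv|vw] best.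
  have := vD (le_lt_trans w0 wv); nra.
have := Dv (lt_le_trans vw wk); nra.
Qed.

Lemma sum_upd (R : realType) (N : nat) (y : 'I_N -> R) j z :
  \sum_(j' < N) upd y j z j' = \sum_(j' < N) y j' - y j + z.
Proof.
rewrite (bigD1 j) //= [X in _ = X - _ + _](bigD1 j) //= /upd eqxx.
rewrite (eq_bigr y) => [|i /negbTE -> //].
by rewrite [y j + _]addrC addrK addrC.
Qed.

Lemma sum_except_const (R : realType) (N : nat) (y : 'I_N -> R) l a :
  (forall j, j != l -> y j = a) -> \sum_(j < N) y j = y l + (N.-1)%:R * a.
Proof.
move=> ya; rewrite (bigD1 l) //= (eq_bigr (fun=> a)) // sumr_const mulr_natl.
by rewrite -[N in N.-1]card_ord -(cardC1 l).
Qed.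

Section SpotMarket.
Variables (R : realType) (M N : nat) (alpha beta c k : R).
Variables (x : 'I_M -> R) (f : 'I_N -> R).
Hypotheses (beta_gt0 : 0 < beta) (k_ge0 : 0 <= k).

Let residual_demand (y : 'I_N -> R) (j : 'I_N) : R :=
  alpha_y alpha beta c + f j - \sum_(i < M) x i - \sum_(j' < N) y j'.

Lemma spot_payoff_upd (y : 'I_N -> R) j z :
  spot_payoff alpha beta c x f (upd y j z) j - spot_payoff alpha beta c x f y j =
  beta * ((z - y j) * (residual_demand y j - z)).
Proof.
rewrite /spot_payoff /residual_demand sum_upd /upd eqxx /price /alpha_y.
by field; rewrite gt_eqF.
Qed.

Lemma spot_NEP (y : 'I_N -> R) :
  spot_NE alpha beta c k x f y <-> forall j, y j = clamp 0 k (residual_demand y j).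
Proof.
have gainP j z : (spot_payoff alpha beta c x f (upd y j z) j <=
    spot_payoff alpha beta c x f y j) = ((z - y j) * (residual_demand y j - z) <= 0).
  by rewrite -subr_le0 spot_payoff_upd pmulr_rle0.
split=> [[y_bd y_best] j|y_clamp].
  by apply/clamp_argmax => // z z_bd; rewrite -gainP; exact: y_best.
have y_bd j : 0 <= y j <= k by rewrite y_clamp clamp_bounds.
split=> // j z z_bd; rewrite gainP.
by move: z z_bd; apply/clamp_argmax.
Qed.

End SpotMarket.

Section AggregateFixpoint.
Variables (R : realType) (N : nat) (k : R) (b : 'I_N -> R).

Let total_response (S : R) : R := \sum_(j < N) clamp 0 k (b j - S).

Lemma total_response_fixpoint : 0 <= k -> exists S, S = total_response S.
Proof.
move=> k0; have resp_bd S : 0 <= total_response S <= k *+ N.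
  rewrite sumr_ge0 => [|j _]; last by case/andP: (clamp_bounds (b j - S) k0).
  rewrite -[N in k *+ N]card_ord -sumr_const; apply: ler_sum => j _.
  by case/andP: (clamp_bounds (b j - S) k0).
have resp_cont : continuous total_response.
  apply: continuous_big => [|j _]; first exact: add_continuous.
  move=> S; apply: (@continuous_comp _ _ _ (fun S => b j - S) (clamp 0 k)).
    by apply: continuousB; [exact: cvg_cst|exact: cvg_id].
  exact: continuous_clamp.
have [S _ /eqP] : exists2 S, S \in `[0, k *+ N] & S - total_response S = 0.
  apply: IVT; first by rewrite mulrn_wge0.
    by apply: continuous_subspaceT => S; apply: continuousB; [exact: cvg_id|exact: resp_cont].
  have := resp_bd 0; have := resp_bd (k *+ N).
  by rewrite /Order.min /Order.max; repeat case: ifP => ?; lra.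
by rewrite subr_eq0 => /eqP; exists S.
Qed.

Lemma total_response_fixpoint_unique S S' :
  S = total_response S -> S' = total_response S' -> S = S'.
Proof.
have resp_anti T T' : T <= T' -> total_response T' <= total_response T.
  by move=> TT'; apply: ler_sum => j _; apply: clamp_le; rewrite lerB.
move=> fixS fixS'; apply/eqP; rewrite eq_le; apply/andP; split; rewrite leNgt;
  apply/negP => lt_S; have := resp_anti _ _ (ltW lt_S); rewrite -fixS -fixS'; lra.
Qed.

End AggregateFixpoint.

Lemma clamp_linear_fixpoint (R : realType) (k n B w : R) : 0 <= k -> 0 <= n ->
  w = clamp 0 k (B - n * w) -> w = clamp 0 k (B / (n + 1)).
Proof.
move=> k0 n0 /clampP-/(_ k0)[w_bd wB Bw]; have n1 : 0 < n + 1 by lra.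
apply/clampP => //; split => // [/wB|/Bw]; [rewrite ler_pdivlMr|rewrite ler_pdivrMr]; nra.
Qed.

Theorem proposition1 (R : realType) (M N : nat) (alpha beta c k : R)
    (x : 'I_M -> R) (fv : 'I_N -> R) (l : 'I_N) (f : R) :
  (1 <= M)%N -> (2 <= N)%N ->
  0 < alpha -> 0 < beta -> 0 < c -> 0 < k ->
  (forall i, 0 <= x i) ->
  (forall j, j != l -> fv j = f) ->
  exists y : 'I_N -> R,
    spot_NE alpha beta c k x fv y /\
    (forall y' : 'I_N -> R, spot_NE alpha beta c k x fv y' -> forall j, y' j = y j) /\
    (forall j, j != l ->
       y j = clamp 0 k ((alpha_y alpha beta c + f - \sum_(i < M) x i - y l) / N%:R)).
Proof.
move=> _ N_ge2 _ beta_gt0 _ /ltW k_ge0 _ fv_f.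
pose b j := alpha_y alpha beta c + fv j - \sum_(i < M) x i.
have [S fixS] := total_response_fixpoint b k_ge0.
pose y j := clamp 0 k (b j - S).
have sum_y : \sum_(j < N) y j = S by rewrite [RHS]fixS.
exists y; split; [|split].
- by apply/spot_NEP => // j; rewrite sum_y.
- move=> y' /spot_NEP-/(_ beta_gt0 k_ge0) y'_clamp j.
  rewrite y'_clamp; suff -> : \sum_(j' < N) y' j' = S by [].
  apply: (total_response_fixpoint_unique (b := b) (k := k)) fixS.
  by apply: eq_bigr => j' _; rewrite {1}y'_clamp.
- move=> j jl; have y_off j' : j' != l -> y j' = y j.
    by move=> /fv_f; rewrite /y /b => ->; rewrite fv_f.
  have hS : S = y l + (N.-1)%:R * y j by rewrite -sum_y (sum_except_const y_off).
  have -> : N%:R = (N.-1)%:R + 1 :> R by rewrite natr1 prednK // ltnW.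
  apply: clamp_linear_fixpoint k_ge0 (ler0n _ _) _.
  by rewrite {1}/y /b fv_f // hS opprD addrA.
Qed.
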